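(* Let $p=\sum_{i=0}^n c_iT^i$ be a polynomial of degree $n\ge1$ over $\mathbb T$, and let $a_1\le\dots\le a_n$ be the unique elements of $\mathbb T$ with $c_n^{-1}p\in\boxdot_{i=1}^n(T+a_i)$. Let $a\ne0$ be one of the $a_i$, and let $k\in\{1,\dots,n\}$ and $m\ge1$ be such that $a=a_k=\dots=a_{k+m-1}$, $a_{k-1}<a_k$ if $k\ge2$, and $a_{k+m-1}<a_{k+m}$ if $k+m\le n$. Define $d_0,\dots,d_{n-1}\in\mathbb T$ by: (1) if $k\le n-m$: $d_{n-1}=c_n$ and, for $i=n-2,n-3,\dots,k+m-1$ (in decreasing order), $d_i=\max\{c_{i+1},ad_{i+1}\}$; (2) if $k\ge2$: $d_0=a^{-1}c_0$ and, for $i=1,\dots,k-2$ (in increasing order), $d_i=\max\{a^{-1}c_i,a^{-1}d_{i-1}\}$; (3) for $i=k-1,\dots,k+m-2$: $d_i=a_{i+2}a_{i+3}\cdots a_nc_n$ (an empty product being $1$). Then $q=\sum_{i=0}^{n-1}d_iT^i$ satisfies $p\in(T+a)\boxdot q$, i.e. $c_n=d_{n-1}$, $c_0=ad_0$, and $c_i\in (ad_i)\boxplus d_{i-1}$ for $i=1,\dots,n-1$.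
   Context: The tropical hyperfield $\mathbb T$ is $\mathbb R_{\ge0}$ with usual multiplication and hyperaddition $a\boxplus b=\{\max\{a,b\}\}$ if $a\ne b$, $a\boxplus a=[0,a]$ (so $c\in a\boxplus b$ iff the maximum of $a,b,c$ is attained at least twice; $-a=a$). Iterated sums: $\boxplus_{i=1}^n a_i=\bigcup_{b\in\boxplus_{i=1}^{n-1}a_i} b\boxplus a_n$. A polynomial over $\mathbb T$ is a finitely supported sequence $(c_i)$, written $\sum c_iT^i$. Hyperproduct: $p\boxdot q=\{\sum e_iT^i : e_i\in \boxplus_{k+l=i} c_kd_l\}$, and $\boxdot_{i=1}^n q_i=\bigcup_{r\in\boxdot_{i=1}^{n-1}q_i} r\boxdot q_n$. Known fact (fundamental theorem for $\mathbb T$): for monic $p$ of degree $n$ there is a unique sequence $a_1\le\dots\le a_n$ in $\mathbb T$ with $p\in\boxdot_{i=1}^n(T+a_i)$; this holds iff $c_i\le a_{i+1}\cdots a_n$ for all $i=0,\dots,n-1$ with equality whenever $a_i<a_{i+1}$ (for $i\ge1$) or $i=0$ and $a_0$ is not defined—precisely: $c_0=a_1\cdots a_n$ and $c_i=a_{i+1}\cdots a_n$ when $a_i<a_{i+1}$; the roots of $p$ are exactly $a_1,\dots,a_n$. *)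

(* The tropical hyperfield T is modelled as the nonnegative
   elements of an arbitrary real field R (the paper uses R_{>=0}). *)
From HB Require Import structures.
From mathcomp Require Import all_boot all_order all_algebra.
Set Implicit Arguments. Unset Strict Implicit. Unset Printing Implicit Defensive.
Import Order.TTheory GRing.Theory Num.Theory.
Local Open Scope ring_scope.

Section Tropical.
Variable R : realFieldType.

Definition hadd (a b c : R) : Prop :=
  if a != b then c = Num.max a b else 0 <= c <= a.

(* membership in the iterated hypersum [+]_{i=1}^n l_i, defined by
   [+]_{i=1}^n = U_{b in [+]_{i=1}^{n-1}} b [+] l_n ; the empty sum is {0}. *)
Fixpoint hsum_rev (l : seq R) (c : R) : Prop :=
  match l with
  | [::] => c = 0
  | x :: l' => exists b, hsum_rev l' b /\ hadd b x c
  end.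
Definition hsum (l : seq R) (c : R) : Prop := hsum_rev (rev l) c.

(* polynomials over T: coefficient sequences (finitely supported ones) *)
Definition tpoly := nat -> R.

Definition pmul (p q r : tpoly) : Prop :=
  forall i, hsum [seq p k * q (i - k)%N | k <- iota 0 i.+1] (r i).

Definition tpoly1 : tpoly := fun i => if i == 0%N then 1 else 0.

Fixpoint hprod_rev (l : seq tpoly) (r : tpoly) : Prop :=
  match l with
  | [::] => r = tpoly1
  | q :: l' => exists s, hprod_rev l' s /\ pmul s q r
  end.
Definition hprod (l : seq tpoly) (r : tpoly) : Prop := hprod_rev (rev l) r.

Definition linT (a : R) : tpoly :=
  fun i => if i == 0%N then a else if i == 1%N then 1 else 0.

End Tropical.

From HB Require Import structures.
From mathcomp Require Import all_boot all_order all_algebra.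
From mathcomp Require Import zify.
Import Order.TTheory GRing.Theory Num.Theory.
Set Implicit Arguments. Unset Strict Implicit. Unset Printing Implicit Defensive.
Local Open Scope ring_scope.

Section Hyperaddition.
Variable R : realFieldType.
Implicit Types x y z : R.

Lemma haddC x y z : hadd x y z <-> hadd y x z.
Proof. by rewrite /hadd eq_sym maxC; case: eqP => [->|_]; split. Qed.

Lemma hadd0x x z : 0 <= x -> (hadd 0 x z <-> z = x).
Proof.
rewrite /hadd => x_ge0; case: eqP => [<- /=|_]; last by rewrite max_r.
by split=> [z0|->]; [apply/eqP; rewrite eq_le andbC | rewrite lexx].
Qed.

Lemma haddx0 x z : 0 <= x -> (hadd x 0 z <-> z = x).
Proof. by move=> x_ge0; split=> [/haddC/(hadd0x _ x_ge0)|/(hadd0x _ x_ge0)/haddC]. Qed.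

Lemma hadd_ge0 x y z : 0 <= x -> 0 <= y -> hadd x y z -> 0 <= z.
Proof.
rewrite /hadd => x_ge0 y_ge0; case: ifP => _; last by case/andP.
by move=> ->; rewrite le_max x_ge0.
Qed.

Lemma hadd_le_max x y z : hadd x y z -> z <= Num.max x y.
Proof. by rewrite /hadd; case: ifP => [_ ->//|/negbFE/eqP <- /andP[_]]; rewrite maxxx. Qed.

Lemma hadd_lt x y z : x < y -> hadd x y z -> z = y.
Proof. by rewrite /hadd lt_neqAle => /andP[-> x_le_y] ->; apply: max_r. Qed.

Lemma hadd_diag x z : 0 <= z <= x -> hadd x x z.
Proof. by rewrite /hadd eqxx. Qed.

Lemma hadd_top x z : 0 <= z -> x <= z -> hadd z x z.
Proof.
rewrite /hadd => z_ge0 x_le_z; case: eqP => [<-|_]; last by rewrite max_l.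
by rewrite z_ge0 lexx.
Qed.

Lemma hadd_max_self y z : 0 <= z -> hadd (Num.max z y) y z.
Proof.
move=> z_ge0; case: leP => [z_le_y|y_lt_z]; first by apply: hadd_diag; rewrite z_ge0.
exact/hadd_top/ltW.
Qed.

End Hyperaddition.

Section Hypersums.
Variable R : realFieldType.
Implicit Types (l : seq R) (z : R).

Lemma hsum_rev_ge0 l z : all (fun x => 0 <= x) l -> hsum_rev l z -> 0 <= z.
Proof.
elim: l z => [z _ /= ->//|x l IH z /= /andP[x_ge0 l_ge0] [y [hy hz]]].
exact: hadd_ge0 (IH _ l_ge0 hy) x_ge0 hz.
Qed.

Lemma hsum_rev_nseq0 j z : hsum_rev (nseq j 0) z <-> z = 0.
Proof.
elim: j z => [//|j IH] z /=; split=> [[y [/IH -> /(hadd0x _ (lexx 0))]]//|->].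
by exists 0; split; [apply/IH | apply/(hadd0x _ (lexx 0))].
Qed.

(* Zero summands can be dropped: leading ones always (they come last in the
   reversed list), trailing ones when the remaining summands are nonnegative. *)
Lemma hsum_rev_pad_end l j z : hsum_rev (l ++ nseq j 0) z <-> hsum_rev l z.
Proof.
elim: l z => [|x l IH] z /=; first exact: hsum_rev_nseq0.
by split=> -[y [hy hz]]; exists y; split=> //; apply/IH.
Qed.

Lemma hsum_rev_pad_front l j z : all (fun x => 0 <= x) l ->
  (hsum_rev (nseq j 0 ++ l) z <-> hsum_rev l z).
Proof.
move=> l_ge0; elim: j z => [//|j IH] z /=.
split=> [[y [/IH hy /(haddx0 _ (hsum_rev_ge0 l_ge0 hy)) ->]]//|hz].
exists z; split; first exact/IH.
exact/(haddx0 _ (hsum_rev_ge0 l_ge0 hz)).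
Qed.

Lemma hsum_pad_left l j z : hsum (nseq j 0 ++ l) z <-> hsum l z.
Proof. by rewrite /hsum rev_cat rev_nseq hsum_rev_pad_end. Qed.

Lemma hsum_pad_right l j z : all (fun x => 0 <= x) l ->
  (hsum (l ++ nseq j 0) z <-> hsum l z).
Proof. by move=> l_ge0; rewrite /hsum rev_cat rev_nseq hsum_rev_pad_front // all_rev. Qed.

Lemma hsum1 x z : 0 <= x -> (hsum [:: x] z <-> z = x).
Proof.
rewrite /hsum /= => x_ge0.
by split=> [[y [-> /(hadd0x _ x_ge0)]]//|->]; exists 0; split=> //; apply/hadd0x.
Qed.

Lemma hsum2 x y z : 0 <= x -> (hsum [:: x; y] z <-> hadd x y z).
Proof.
rewrite /hsum /= => x_ge0; split=> [[w [[v [-> /(hadd0x _ x_ge0) ->]] hz]]//|hz].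
by exists x; split=> //; exists 0; split=> //; apply/hadd0x.
Qed.

End Hypersums.

Section LinearFactor.
Variable R : realFieldType.
Implicit Types (s d r c : tpoly R) (a b : R).

Lemma map_vanishing (f : nat -> R) (l : seq nat) :
  {in l, forall t, f t = 0} -> map f l = nseq (size l) 0.
Proof.
elim: l => [//|t l IH] f0 /=; rewrite f0 ?mem_head // IH // => u lu.
by apply: f0; rewrite in_cons lu orbT.
Qed.

Lemma pmul_linT_coef0 s b r : 0 <= s 0%N * b -> pmul s (linT b) r -> r 0%N = s 0%N * b.
Proof. by move=> sb_ge0 /(_ 0%N); rewrite /= /linT /= hsum1. Qed.

Lemma pmul_linT_coefS s b r i : (forall j, 0 <= s j) -> pmul s (linT b) r ->
  hadd (s i) (s i.+1 * b) (r i.+1).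
Proof.
move=> s_ge0 /(_ i.+1); rewrite -addn2 iotaD map_cat map_vanishing; last first.
  move=> t; rewrite mem_iota /linT => /andP[_ t_lt_i].
  by rewrite ifN_eq ?ifN_eq ?mulr0 //; lia.
by rewrite hsum_pad_left add0n /= subSnn subnn /linT /= mulr1 hsum2.
Qed.

Lemma linT_pmul a d c : 0 <= a -> (forall i, 0 <= d i) ->
  c 0%N = a * d 0%N -> (forall i, hadd (a * d i.+1) (d i) (c i.+1)) ->
  pmul (linT a) d c.
Proof.
move=> a_ge0 d_ge0 c0 cS [|i]; first by rewrite /= /linT /= hsum1 // mulr_ge0.
rewrite -add2n iotaD map_cat [X in _ ++ X]map_vanishing; last first.
  move=> t; rewrite mem_iota /linT => /andP[t_ge2 _].
  by rewrite ifN_eq ?ifN_eq ?mul0r //; lia.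
rewrite hsum_pad_right /linT /= subn0 subn1 mul1r; last by rewrite !mulr_ge0 ?d_ge0 ?ler01.
by rewrite hsum2 // mulr_ge0.
Qed.

Lemma linT_pmul_deg n a d c : 0 <= a -> (forall i, 0 <= d i) ->
  (forall i, (n < i)%N -> c i = 0) -> (forall i, (n <= i)%N -> d i = 0) ->
  c n = d (n - 1)%N -> c 0%N = a * d 0%N ->
  (forall i, (1 <= i <= n - 1)%N -> hadd (a * d i) (d (i - 1)%N) (c i)) ->
  pmul (linT a) d c.
Proof.
move=> a_ge0 d_ge0 c_deg d_deg c_lead c0 c_mid; apply: linT_pmul => // i.
case: (ltngtP i.+1 n) => [lt_in|lt_ni|eq_in].
- by have := c_mid i.+1; rewrite subSS subn0; apply; lia.
- rewrite !d_deg ?c_deg ?mulr0 //; try lia.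
  by apply: hadd_diag; rewrite lexx.
- move: c_lead; rewrite -eq_in subn1 /= => ->.
  by rewrite d_deg ?eq_in // mulr0; apply/hadd0x.
Qed.

End LinearFactor.

Section TropicalVieta.
Variable R : realFieldType.
Implicit Types (b : nat -> R) (s r : tpoly R).

Definition tailprod b N i : R := \prod_(i.+1 <= j < N.+1) b j.

Lemma tailprodS b N i : (i < N)%N -> tailprod b N i = b i.+1 * tailprod b N i.+1.
Proof. by move=> i_lt_N; rewrite /tailprod big_ltn. Qed.

Lemma tailprodNN b N : tailprod b N N = 1.
Proof. by rewrite /tailprod big_geq. Qed.

Lemma tailprod_extend b N i : (i <= N)%N -> tailprod b N.+1 i = tailprod b N i * b N.+1.
Proof. by move=> i_le_N; rewrite /tailprod big_nat_recr. Qed.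

Lemma tailprod_ge0 b N i : (forall j, (i < j <= N)%N -> 0 <= b j) -> 0 <= tailprod b N i.
Proof.
move=> b_ge0; rewrite /tailprod big_seq prodr_ge0 // => j.
by rewrite mem_iota => j_range; apply: b_ge0; lia.
Qed.

Lemma tailprod_gt0 b N i : (forall j, (i < j <= N)%N -> 0 < b j) -> 0 < tailprod b N i.
Proof.
move=> b_gt0; rewrite /tailprod big_seq prodr_gt0 // => j.
by rewrite mem_iota => j_range; apply: b_gt0; lia.
Qed.

(* The forward half of the fundamental theorem for T (tropical Vieta relations):
   a product of factors T + b_j, 0 <= b_1 <= ... <= b_N, is monic of degree N,
   has constant term b_1 ... b_N, and its i-th coefficient is at most
   b_(i+1) ... b_N, with equality whenever b_i < b_(i+1). *)
Record vieta b N r : Prop := Vieta {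
  vieta_ge0 : forall i, 0 <= r i;
  vieta_deg : forall i, (N < i)%N -> r i = 0;
  vieta_lead : r N = 1;
  vieta_const : r 0%N = tailprod b N 0;
  vieta_le : forall i, (i <= N)%N -> r i <= tailprod b N i;
  vieta_eq : forall i, (0 < i < N)%N -> b i < b i.+1 -> r i = tailprod b N i }.

Lemma vieta_one b : vieta b 0 (tpoly1 R).
Proof. by split=> [[|i]|[|i]|||[|i]|[|i]] //=; rewrite ?tailprodNN ?ler01. Qed.

Section VietaStep.
Variables (b : nat -> R) (N : nat) (s r : tpoly R).
Hypothesis b_ge0 : forall j, (1 <= j <= N.+1)%N -> 0 <= b j.
Hypothesis b_mono : forall i j, (1 <= i)%N -> (i <= j)%N -> (j <= N.+1)%N -> b i <= b j.
Hypothesis s_vieta : vieta b N s.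
Hypothesis r_mul : pmul s (linT (b N.+1)) r.

Let bN_ge0 : 0 <= b N.+1. Proof. by apply: b_ge0; lia. Qed.

Let tailprod_N_ge0 i : 0 <= tailprod b N i.
Proof. by apply: tailprod_ge0 => j ij; apply: b_ge0; lia. Qed.

Let r_coef0 : r 0%N = s 0%N * b N.+1.
Proof. by apply: pmul_linT_coef0 r_mul; rewrite mulr_ge0 ?(vieta_ge0 s_vieta). Qed.

Let r_coefS i : hadd (s i) (s i.+1 * b N.+1) (r i.+1).
Proof. exact: pmul_linT_coefS (vieta_ge0 s_vieta) r_mul. Qed.

Let r_lead : r N.+1 = 1.
Proof.
move: (r_coefS N); rewrite (vieta_lead s_vieta) (vieta_deg s_vieta) // mul0r.
by move/(haddx0 _ ler01).
Qed.

(* r_(i+1) <= max (s_i, s_(i+1) b_(N+1)), and both terms are at most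
   b_(i+2) ... b_(N+1) because b_(i+1) <= b_(N+1). *)
Let r_le i : (i <= N.+1)%N -> r i <= tailprod b N.+1 i.
Proof.
case: i => [_|i]; first by rewrite r_coef0 (vieta_const s_vieta) tailprod_extend.
rewrite leq_eqVlt => /orP[/eqP[->]|i_lt_N]; first by rewrite r_lead tailprodNN.
apply: le_trans (hadd_le_max (r_coefS i)) _; rewrite tailprod_extend // ge_max.
apply/andP; split; last by rewrite ler_wpM2r ?(vieta_le s_vieta).
apply: le_trans (vieta_le s_vieta (ltnW i_lt_N)) _.
rewrite tailprodS // mulrC ler_wpM2l //; apply: b_mono; lia.
Qed.

(* At a strict jump b_(i+1) < b_(i+2), the term s_(i+1) b_(N+1) strictly dominates. *)
Let r_eq i : (0 < i < N.+1)%N -> b i < b i.+1 -> r i = tailprod b N.+1 i.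
Proof.
case: i => [//|i] /andP[_ i_lt_N] jump.
have s_tight : s i.+1 = tailprod b N i.+1.
  have [lt|->] : (i.+1 < N)%N \/ i.+1 = N by lia.
    exact: (vieta_eq s_vieta).
  by rewrite (vieta_lead s_vieta) tailprodNN.
have tail_gt0 : 0 < tailprod b N i.+1.
  have jump_gt0 : 0 < b i.+2 by apply: le_lt_trans jump; apply: b_ge0; lia.
  apply: tailprod_gt0 => j ij; apply: lt_le_trans jump_gt0 _; apply: b_mono; lia.
rewrite tailprod_extend // -s_tight; apply: hadd_lt (r_coefS i).
apply: le_lt_trans (vieta_le s_vieta (ltnW i_lt_N)) _.
rewrite tailprodS // s_tight mulrC ltr_pM2l //.
by apply: lt_le_trans jump _; apply: b_mono; lia.
Qed.

Lemma vieta_step : vieta b N.+1 r.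
Proof.
split=> //.
- case=> [|i]; first by rewrite r_coef0 mulr_ge0 ?(vieta_ge0 s_vieta).
  by apply: hadd_ge0 (r_coefS i); rewrite ?mulr_ge0 ?(vieta_ge0 s_vieta).
- case=> [//|i] i_gt; move: (r_coefS i); rewrite !(vieta_deg s_vieta) ?mul0r //; try lia.
  by move/(hadd0x _ (lexx 0)).
- by rewrite r_coef0 (vieta_const s_vieta) tailprod_extend.
Qed.

End VietaStep.

Lemma vieta_hprod b N r : (forall i, (1 <= i <= N)%N -> 0 <= b i) ->
  (forall i j, (1 <= i)%N -> (i <= j)%N -> (j <= N)%N -> b i <= b j) ->
  hprod [seq linT (b i) | i <- iota 1 N] r -> vieta b N r.
Proof.
elim: N r => [|N IH] r b_ge0 b_mono; first by rewrite /hprod /= => ->; apply: vieta_one.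
have -> : iota 1 N.+1 = iota 1 N ++ [:: N.+1] by rewrite -[in LHS](addn1 N) iotaD add1n.
rewrite /hprod map_cat rev_cat /= => -[s [s_prod r_mul]].
apply: vieta_step r_mul => //; apply: (IH s _ _ s_prod).
- by move=> i i_range; apply: b_ge0; lia.
- by move=> i j *; apply: b_mono; lia.
Qed.

End TropicalVieta.

Section Deflation.
Variable R : realFieldType.

Record deflation_setting n (c rts : nat -> R) (a : R) (k m : nat) (d : nat -> R)
  : Prop := DeflationSetting {
  coef_ge0 : forall i, 0 <= c i;
  lead_neq0 : c n != 0;
  coef_deg : forall i, (n < i)%N -> c i = 0;
  root_ge0 : forall i, (1 <= i <= n)%N -> 0 <= rts i;
  root_mono : forall i j, (1 <= i)%N -> (i <= j)%N -> (j <= n)%N -> rts i <= rts j;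
  root_factor : hprod [seq linT (rts i) | i <- iota 1 n] (fun i => (c n)^-1 * c i);
  a_neq0 : a != 0;
  k_range : (1 <= k <= n)%N;
  m_pos : (1 <= m)%N;
  run_le : (k + m - 1 <= n)%N;
  run_eq : forall j, (k <= j <= k + m - 1)%N -> rts j = a;
  run_left : (2 <= k)%N -> rts (k - 1)%N < rts k;
  run_right : (k + m <= n)%N -> rts (k + m - 1)%N < rts (k + m)%N;
  d_high : (k <= n - m)%N ->
     d (n - 1)%N = c n /\
     (forall i, (k + m - 1 <= i <= n - 2)%N -> d i = Num.max (c i.+1) (a * d i.+1));
  d_low : (2 <= k)%N ->
     d 0%N = a^-1 * c 0%N /\
     (forall i, (1 <= i <= k - 2)%N ->
        d i = Num.max (a^-1 * c i) (a^-1 * d (i - 1)%N));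
  d_run : forall i, (k - 1 <= i <= k + m - 2)%N ->
     d i = (\prod_(i.+2 <= j < n.+1) rts j) * c n;
  d_zero : forall i, (n <= i)%N -> d i = 0 }.

Section DeflationProof.
Variables (n : nat) (c rts : nat -> R) (a : R) (k m : nat) (d : nat -> R).
Hypothesis S : deflation_setting n c rts a k m d.

Local Ltac lia_ranges := move: (k_range S) (m_pos S) (run_le S); lia.

(* The envelope c_n rts_(i+1) ... rts_n, an upper bound for c_i. *)
Local Notation env i := (tailprod rts n i * c n).

(* The monic polynomial c_n^-1 p satisfies the Vieta relations; scaling back by
   c_n > 0 gives those of p. *)
Lemma lead_gt0 : 0 < c n.
Proof. by rewrite lt_def (lead_neq0 S) (coef_ge0 S). Qed.

Lemma monic_vieta : vieta rts n (fun i => (c n)^-1 * c i).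
Proof. exact: vieta_hprod (root_ge0 S) (root_mono S) (root_factor S). Qed.

Lemma coef_unscale i : (c n)^-1 * c i * c n = c i.
Proof. by rewrite mulrAC mulVf ?mul1r ?(lead_neq0 S). Qed.

Lemma coef_le_env i : (i <= n)%N -> c i <= env i.
Proof.
by move=> i_le_n; rewrite -(coef_unscale i) ler_pM2r ?lead_gt0 ?(vieta_le monic_vieta).
Qed.

Lemma coef0_env : c 0%N = env 0%N.
Proof. by rewrite -(coef_unscale 0) (vieta_const monic_vieta). Qed.

Lemma coef_eq_env i : (0 < i < n)%N -> rts i < rts i.+1 -> c i = env i.
Proof. by move=> i_range jump; rewrite -(coef_unscale i) (vieta_eq monic_vieta). Qed.

Lemma env_ge0 i : 0 <= env i.
Proof.
apply: mulr_ge0 (ltW lead_gt0); apply: tailprod_ge0 => j j_range.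
by apply: (root_ge0 S); lia.
Qed.

Lemma envS i : (i < n)%N -> env i = rts i.+1 * env i.+1.
Proof. by move=> i_lt_n; rewrite tailprodS // mulrA. Qed.

Lemma env_lead : env n = c n.
Proof. by rewrite tailprodNN mul1r. Qed.

Lemma a_gt0 : 0 < a.
Proof.
have ak : rts k = a by apply: (run_eq S); lia_ranges.
by rewrite lt_def (a_neq0 S) -ak (root_ge0 S) //; lia_ranges.
Qed.

Lemma root_le_a j : (1 <= j <= k)%N -> rts j <= a.
Proof.
by move=> j_range; rewrite -(run_eq S (j := k)); [apply: (root_mono S) | ]; lia_ranges.
Qed.

Lemma a_le_root j : (k <= j <= n)%N -> a <= rts j.
Proof.
by move=> j_range; rewrite -(run_eq S (j := k)); [apply: (root_mono S) | ]; lia_ranges.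
Qed.

Lemma env_div_a j x : (j < k)%N -> x <= env j -> a^-1 * x <= env j.+1.
Proof.
move=> j_lt_k x_le; rewrite mulrC ler_pdivrMr ?a_gt0 //.
apply: le_trans x_le _; rewrite envS; last lia_ranges.
rewrite [X in _ <= X]mulrC.
by apply: (ler_wpM2r (env_ge0 _)); apply: root_le_a; lia.
Qed.

Lemma env_mul_a j x : (k <= j.+1 <= n)%N -> x <= env j.+1 -> a * x <= env j.
Proof.
move=> j_range x_le; rewrite envS; last lia.
apply: le_trans (ler_wpM2l (ltW a_gt0) x_le) _.
by apply: (ler_wpM2r (env_ge0 _)); apply: a_le_root; lia.
Qed.

Lemma d_run_env i : (k <= i.+1 <= k + m - 1)%N -> d i = env i.+1.
Proof. by move=> i_range; apply: (d_run S); lia. Qed.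

Lemma a_d_run i : (k <= i.+1 <= k + m - 1)%N -> a * d i = env i.
Proof.
move=> i_range; rewrite d_run_env // -(run_eq S (j := i.+1)) // -envS //; lia_ranges.
Qed.

Lemma d_high_bound i : (k + m <= i.+1 <= n)%N -> 0 <= d i /\ a * d i <= env i.
Proof.
move=> i_range; have [d_last d_rec] := d_high S ltac:(lia).
have [t t_def] : exists t, (n - i.+1)%N = t by exists (n - i.+1)%N.
elim: t i t_def i_range => [|t IH] i t_def i_range.
  have -> : i = (n - 1)%N by lia.
  rewrite d_last; split; first exact: (coef_ge0 S).
  apply: env_mul_a; first lia_ranges.
  by rewrite (_ : (n - 1).+1 = n) ?env_lead //; lia.
have [d1_ge0 ad1_le] := IH i.+1 ltac:(lia) ltac:(lia).
have d_le : Num.max (c i.+1) (a * d i.+1) <= env i.+1.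
  by rewrite ge_max ad1_le coef_le_env //; lia.
rewrite d_rec; last lia.
split; first by rewrite le_max (coef_ge0 S).
by apply: env_mul_a d_le; lia.
Qed.

Lemma d_low_bound i : (i.+2 <= k)%N -> 0 <= d i /\ d i <= env i.+1.
Proof.
move=> i_lt; have [d_first d_rec] := d_low S ltac:(lia).
have ainv_ge0 : 0 <= a^-1 by rewrite invr_ge0 ltW ?a_gt0.
elim: i i_lt => [k_ge2|i IH i_lt].
  rewrite d_first; split; first by rewrite mulr_ge0 ?(coef_ge0 S).
  by apply: env_div_a; [lia | rewrite coef0_env lexx].
have [di_ge0 di_le] := IH ltac:(lia).
rewrite d_rec ?subSS ?subn0; last lia.
split; first by rewrite le_max mulr_ge0 ?(coef_ge0 S).
by rewrite ge_max !env_div_a ?coef_le_env //; lia_ranges.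
Qed.

Lemma d_ge0 i : 0 <= d i.
Proof.
case: (leqP n i) => [n_le_i|i_lt_n]; first by rewrite (d_zero S).
case: (ltnP i.+1 k) => [low|k_le]; first by case: (d_low_bound low).
case: (leqP i.+2 (k + m)) => [run|high]; first by rewrite d_run_env ?env_ge0 //; lia.
by have /d_high_bound[] : (k + m <= i.+1 <= n)%N by lia.
Qed.

Lemma coef_below_run i : (0 < i)%N -> (i.+2 <= k)%N ->
  hadd (a * d i) (d (i - 1)%N) (c i).
Proof.
move=> i_gt0 i_lt; have [_ d_rec] := d_low S ltac:(lia).
rewrite d_rec; last lia.
rewrite maxr_pMr ?ltW ?a_gt0 // !mulrA mulfV ?(a_neq0 S) // !mul1r.
exact/hadd_max_self/(coef_ge0 S).
Qed.

Lemma coef_run_start i : (0 < i)%N -> i.+1 = k -> hadd (a * d i) (d (i - 1)%N) (c i).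
Proof.
move=> i_gt0 ik.
have c_tight : c i = env i.
  apply: coef_eq_env; first lia_ranges.
  by move: (run_left S); rewrite -ik subSS subn0; apply; lia.
have /d_low_bound[_ d_prev] : ((i - 1).+2 <= k)%N by lia.
rewrite a_d_run -?c_tight; last lia_ranges.
by apply: hadd_top; rewrite ?(coef_ge0 S) // c_tight -[X in env X](@subnK 1 i) ?addn1.
Qed.

Lemma coef_run_inside i : (k <= i)%N -> (i.+2 <= k + m)%N ->
  hadd (a * d i) (d (i - 1)%N) (c i).
Proof.
move=> k_le i_lt; rewrite a_d_run ?d_run_env; try lia_ranges.
rewrite (_ : (i - 1).+1 = i); last lia_ranges.
by apply: hadd_diag; rewrite (coef_ge0 S) coef_le_env //; lia_ranges.
Qed.

Lemma coef_run_end i : i.+1 = (k + m)%N -> (i < n)%N ->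
  hadd (a * d i) (d (i - 1)%N) (c i).
Proof.
move=> ikm i_lt_n.
have c_tight : c i = env i.
  apply: coef_eq_env; first lia_ranges.
  by move: (run_right S); rewrite -ikm subSS subn0; apply; lia.
have /d_high_bound[_ ad_le] : (k + m <= i.+1 <= n)%N by lia.
rewrite [d (i - 1)%N]d_run_env (_ : (i - 1).+1 = i) -?c_tight; try lia_ranges.
by apply/haddC/hadd_top; rewrite ?(coef_ge0 S) // c_tight.
Qed.

Lemma coef_above_run i : (k + m <= i < n)%N -> hadd (a * d i) (d (i - 1)%N) (c i).
Proof.
move=> i_range; have [_ d_rec] := d_high S ltac:(lia).
rewrite (d_rec (i - 1)%N); last lia.
rewrite (_ : (i - 1).+1 = i); last lia_ranges.
exact/haddC/hadd_max_self/(coef_ge0 S).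
Qed.

Lemma deflation_coef i : (1 <= i <= n - 1)%N -> hadd (a * d i) (d (i - 1)%N) (c i).
Proof.
move=> i_range.
have [below|[start|[inside|[stop|above]]]] : (i.+2 <= k \/ i.+1 = k \/
    (k <= i /\ i.+2 <= k + m) \/ i.+1 = k + m \/ k + m <= i)%N by lia.
- by apply: coef_below_run; lia.
- by apply: coef_run_start; lia.
- by case: inside => k_le i_lt; apply: coef_run_inside.
- by apply: coef_run_end; lia.
- by apply: coef_above_run; lia.
Qed.

Lemma deflation_lead : c n = d (n - 1)%N.
Proof.
case: (leqP k (n - m)) => [k_le|k_gt]; first by case: (d_high S k_le) => ->.
rewrite d_run_env (_ : (n - 1).+1 = n) ?env_lead //; lia_ranges.
Qed.

Lemma deflation_const : c 0%N = a * d 0%N.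
Proof.
case: (leqP 2 k) => [k_ge2|k_lt2].
  by case: (d_low S k_ge2) => -> _; rewrite mulrA mulfV ?(a_neq0 S) ?mul1r.
by rewrite a_d_run ?coef0_env //; lia_ranges.
Qed.

End DeflationProof.
End Deflation.

Theorem mainTheorem6 (R : realFieldType) (n : nat) (c : nat -> R)
  (rts : nat -> R) (a : R) (k m : nat) (d : nat -> R) :
  (* p = sum c_i T^i is a polynomial over T of degree n >= 1 *)
  (1 <= n)%N ->
  (forall i, 0 <= c i) ->
  c n != 0 ->
  (forall i, (n < i)%N -> c i = 0) ->
  (* a_1 <= ... <= a_n in T with c_n^{-1} p in [.]_{i=1}^n (T + a_i) *)
  (forall i, (1 <= i <= n)%N -> 0 <= rts i) ->
  (forall i j, (1 <= i)%N -> (i <= j)%N -> (j <= n)%N -> rts i <= rts j) ->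
  hprod [seq linT (rts i) | i <- iota 1 n] (fun i => (c n)^-1 * c i) ->
  (* a <> 0 occurs exactly at positions k, ..., k+m-1 *)
  a != 0 ->
  (1 <= k <= n)%N -> (1 <= m)%N -> (k + m - 1 <= n)%N ->
  (forall j, (k <= j <= k + m - 1)%N -> rts j = a) ->
  ((2 <= k)%N -> rts (k - 1)%N < rts k) ->
  ((k + m <= n)%N -> rts (k + m - 1)%N < rts (k + m)%N) ->
  (* definition of d_0, ..., d_{n-1} (and d_i = 0 for i >= n) *)
  ((k <= n - m)%N ->
     d (n - 1)%N = c n /\
     (forall i, (k + m - 1 <= i <= n - 2)%N ->
        d i = Num.max (c i.+1) (a * d i.+1))) ->
  ((2 <= k)%N ->
     d 0%N = a^-1 * c 0%N /\
     (forall i, (1 <= i <= k - 2)%N ->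
        d i = Num.max (a^-1 * c i) (a^-1 * d (i - 1)%N))) ->
  (forall i, (k - 1 <= i <= k + m - 2)%N ->
     d i = (\prod_(i.+2 <= j < n.+1) rts j) * c n) ->
  (forall i, (n <= i)%N -> d i = 0) ->
  (* conclusion: p in (T + a) [.] q, where q = sum_{i<n} d_i T^i *)
  pmul (linT a) d c /\
  (c n = d (n - 1)%N /\ c 0%N = a * d 0%N /\
   forall i, (1 <= i <= n - 1)%N -> hadd (a * d i) (d (i - 1)%N) (c i)).
Proof.
move=> *; have S : deflation_setting n c rts a k m d by split.
have lead := deflation_lead S; have const := deflation_const S.
have coef := deflation_coef S.
split; last by [].
exact: linT_pmul_deg (ltW (a_gt0 S)) (d_ge0 S) (coef_deg S) (d_zero S)
  lead const coef.
Qed.
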